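(* Let $X_2$ be a first-order linear partial differential operator and $H\neq 0$ a linear partial differential operator, both in $\mathbf{F}[D_{x_1},\ldots,D_{x_n}]$. Then the element $\omega = -[X_2,H]H^{-1}$ of the skew Ore field $\mathbf{F}(D_{x_1},\ldots,D_{x_n})$ is a differential operator (i.e. lies in $\mathbf{F}[D_{x_1},\ldots,D_{x_n}]$) if and only if there is a function $\psi\in\mathbf{F}$ such that $HX_2 = (X_2+\psi)H$.
   Context: $\mathbf{F}$ is a differential field of functions of $x_1,\ldots,x_n$; $\mathbf{F}[D_{x_1},\ldots,D_{x_n}]$ is the ring of linear partial differential operators with coefficients in $\mathbf{F}$, and $\mathbf{F}(D_{x_1},\ldots,D_{x_n})$ its skew Ore field of formal left fractions $P^{-1}Q$ (with $P^{-1}Q\sim K^{-1}N$ iff $SP=TK$, $SQ=TN$ for some nonzero operators $S,T$). $[A,B]=AB-BA$. *)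

From HB Require Import structures.
From mathcomp Require Import all_boot all_order all_algebra.
From mathcomp Require Import mpoly.
Set Implicit Arguments. Unset Strict Implicit. Unset Printing Implicit Defensive.
Import GRing.Theory.
Local Open Scope ring_scope.

Record diffField (F : fieldType) (n : nat) := DiffField {
  der : 'I_n -> F -> F;
  der_add : forall i a b, der i (a + b) = der i a + der i b;
  der_mul : forall i a b, der i (a * b) = der i a * b + a * der i b;
  der_comm : forall i j a, der i (der j a) = der j (der i a)
}.

(* Linear partial differential operators F[D_1,...,D_n]:
   the operator  sum_m c_m D^m  (coefficients on the left) is represented by
   the multivariate polynomial  sum_m c_m 'X^m  in {mpoly F[n]} (additive
   structure and F-left-scaling agree); the product is the
   non-commutative one given by D_i a = a D_i + d_i(a). *)
Section LPDO.
Variables (F : fieldType) (n : nat) (d : diffField F n).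

(* left multiplication by D_i :  D_i (sum c_m D^m) = sum (d_i c_m) D^m + c_m D^(m+e_i) *)
Definition lmulD (i : 'I_n) (L : {mpoly F[n]}) : {mpoly F[n]} :=
  map_mpoly (der d i) L + L * 'X_i.

Definition lmulDm (m : 'X_{1..n}) (L : {mpoly F[n]}) : {mpoly F[n]} :=
  foldr (fun i acc => iter (m i) (lmulD i) acc) L (enum 'I_n).

Definition opmul (L M : {mpoly F[n]}) : {mpoly F[n]} :=
  \sum_(m <- msupp L) (L@_m) *: lmulDm m M.

Definition opcomm (A B : {mpoly F[n]}) : {mpoly F[n]} :=
  opmul A B - opmul B A.

Definition has_order_le (k : nat) (L : {mpoly F[n]}) : Prop :=
  forall m, m \in msupp L -> (mdeg m <= k)%N.

End LPDO.

From mathcomp Require Import all_boot all_algebra.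
From mathcomp Require Import mpoly.
From mathcomp Require ssrcomplements.
From mathcomp Require Import zify.
Import GRing.Theory.
Local Open Scope ring_scope.

(* Read an operator as the commutative polynomial of its coefficients, so
   that [msize] is its order plus one.  Since D_i a = a D_i + d_i(a), the
   operator product agrees with the commutative product up to terms of lower
   order; hence a commutator of operators of orders a and h has order at
   most a + h - 1.  If -[X2, H] = L H with X2 of order 1, comparing orders
   gives ord L + h <= h, so L is a function psi. *)

Section OperatorProduct.
Context {F : fieldType} {n : nat} (d : diffField F n).
Implicit Types (A M P Q : {mpoly F[n]}) (f g : {mpoly F[n]} -> {mpoly F[n]}).

Lemma msizeM_le_pred {A B a b} :
  (msize A <= a)%N -> (msize B <= b)%N -> (msize (A * B) <= (a + b).-1)%N.
Proof.
move=> sA sB; have [->|nA] := eqVneq A 0; first by rewrite mul0r msize0.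
have [->|nB] := eqVneq B 0; first by rewrite mulr0 msize0.
by rewrite msizeM // -!subn1 leq_sub2r // leq_add.
Qed.

Lemma msize_map_mpoly_le (f : F -> F) A : (msize (map_mpoly f A) <= msize A)%N.
Proof.
rewrite /map_mpoly /mmap /=; apply: leq_trans; first exact: msize_sum.
apply/bigmax_leqP_seq => m mA _.
rewrite /mmap1 -mpolyXE_id /= mul_mpolyC.
by apply: (leq_trans (msizeZ_le _ _)); rewrite msizeX; apply: msize_mdeg_lt.
Qed.

Lemma msize_le_of_order_le k A : has_order_le k A -> (msize A <= k.+1)%N.
Proof. by move=> hA; rewrite msizeE; apply/bigmax_leqP_seq => m /hA. Qed.

Definition principal_part f P k :=
  (msize P <= k.+1)%N /\
  forall A a, (msize A <= a.+1)%N -> (msize (f A - A * P) <= a + k)%N.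

Lemma principal_part_id : principal_part id 1 0.
Proof. by split=> [|A a _]; rewrite ?msize1 // mulr1 subrr msize0. Qed.

Lemma principal_part_comp {f g P Q k l} :
  principal_part f P k -> principal_part g Q l ->
  principal_part (g \o f) (P * Q) (k + l).
Proof.
move=> [sP hf] [sQ hg]; split.
  by apply: (leq_trans (msizeM_le_pred sP sQ)); lia.
move=> A a sA.
have sfA : (msize (f A) <= (a + k).+1)%N.
  rewrite -[f A](subrK (A * P)); apply: (leq_trans (msizeD_le _ _)).
  rewrite geq_max (leq_trans (hf A a sA)) //=.
  by apply: (leq_trans (msizeM_le_pred sA sP)); lia.
have -> : (g \o f) A - A * (P * Q) = (g (f A) - f A * Q) + (f A - A * P) * Q.
  by rewrite mulrBl mulrA addrA subrK.
apply: (leq_trans (msizeD_le _ _)); rewrite geq_max addnA hg //=.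
by apply: (leq_trans (msizeM_le_pred (hf A a sA) sQ)); lia.
Qed.

Lemma principal_part_iter {f P k} j :
  principal_part f P k -> principal_part (iter j f) (P ^+ j) (k * j).
Proof.
move=> hf; elim: j => [|j IH]; first by rewrite expr0 muln0; exact: principal_part_id.
by rewrite exprSr mulnS addnC; apply: principal_part_comp.
Qed.

Lemma principal_part_lmulD i : principal_part (lmulD d i) 'X_i 1.
Proof.
split=> [|A a sA]; first by rewrite msizeX mdeg1.
rewrite /lmulD addrK (leq_trans (msize_map_mpoly_le _ _)) //.
by rewrite addn1.
Qed.

Lemma principal_part_lmulDm m : principal_part (lmulDm d m) 'X_[m] (mdeg m).
Proof.
rewrite mpolyXE_id mdegE -!big_enum /= /lmulDm.
elim: (enum 'I_n) => [|i s IH]; first by rewrite !big_nil; exact: principal_part_id.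
rewrite !big_cons mulrC addnC.
have := principal_part_comp IH (principal_part_iter (m i) (principal_part_lmulD i)).
by rewrite mul1n.
Qed.

Lemma opmul_sum_ord A M k : (msize A <= k)%N ->
  opmul d A M = \sum_(m : 'X_{1..n < k}) A@_m *: lmulDm d m M.
Proof.
move=> sA; rewrite /opmul (ssrcomplements.big_mksub 'X_{1..n < k}) ?msupp_uniq //=.
  by rewrite big_rmcond //= => m /memN_msupp_eq0 ->; rewrite scale0r.
by move=> m /msize_mdeg_lt /leq_trans; apply.
Qed.

Lemma opmulDl A B M : opmul d (A + B) M = opmul d A M + opmul d B M.
Proof.
pose k := (msize A + msize B)%N.
rewrite !(@opmul_sum_ord _ _ k) ?leq_addr ?leq_addl //; last first.
  by apply: (leq_trans (msizeD_le _ _)); rewrite geq_max leq_addr leq_addl.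
by rewrite -big_split; apply: eq_bigr => m _; rewrite mcoeffD scalerDl.
Qed.

Lemma msize_opmul_sub_mul {A M a j} :
  (msize A <= a.+1)%N -> (msize M <= j.+1)%N ->
  (msize (opmul d A M - A * M) <= j + a)%N.
Proof.
move=> sA sM.
have -> : opmul d A M - A * M =
    \sum_(m <- msupp A) A@_m *: (lmulDm d m M - M * 'X_[m]).
  rewrite {2}[A]mpolyE mulr_suml /opmul -sumrB; apply: eq_bigr => m _.
  by rewrite scalerBr -scalerAl mulrC.
apply: leq_trans; first exact: msize_sum.
apply/bigmax_leqP_seq => m mA _; apply: (leq_trans (msizeZ_le _ _)).
have [_ hm] := principal_part_lmulDm m.
apply: (leq_trans (hm M j sM)); rewrite leq_add2l -ltnS.
exact: leq_trans (msize_mdeg_lt mA) sA.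
Qed.

Lemma msize_opcomm {A M a j} :
  (msize A <= a.+1)%N -> (msize M <= j.+1)%N ->
  (msize (opcomm d A M) <= j + a)%N.
Proof.
move=> sA sM.
have -> : opcomm d A M = (opmul d A M - A * M) - (opmul d M A - M * A).
  by rewrite /opcomm mulrC opprB addrA subrK.
apply: (leq_trans (msizeD_le _ _)); rewrite msizeN geq_max.
by rewrite msize_opmul_sub_mul //= addnC msize_opmul_sub_mul.
Qed.

Lemma msize_opcomm_quotient {X H L a} :
  (msize X <= a.+1)%N -> H != 0 -> - opcomm d X H = opmul d L H ->
  (msize L <= a)%N.
Proof.
move=> sX nH hL; rewrite leqNgt; apply/negP => lL.
have nL : L != 0 by rewrite -msize_poly_eq0; case: (msize L) lL.
have sH : msize H = (msize H).-1.+1 by rewrite prednK // lt0n msize_poly_eq0.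
have sL : msize L = (msize L).-1.+1 by rewrite prednK //; case: (msize L) lL.
have sLH : msize (L * H) = (msize L + (msize H).-1)%N.
  by rewrite msizeM // sH addnS.
have E1 := msize_opcomm sX (eq_leq sH).
have E2 := msize_opmul_sub_mul (eq_leq sL) (eq_leq sH).
have : (msize (L * H) <= maxn ((msize H).-1 + a) ((msize H).-1 + (msize L).-1))%N.
  have -> : L * H = - opcomm d X H - (opmul d L H - L * H).
    by rewrite hL opprB addrC subrK.
  apply: (leq_trans (msizeD_le _ _)).
  by rewrite !msizeN geq_max !leq_max E1 E2 orbT.
by rewrite sLH; move: lL; lia.
Qed.

End OperatorProduct.

Theorem lemma2 (F : fieldType) (n : nat) (d : diffField F n)
    (X2 H : {mpoly F[n]}) :
  has_order_le 1 X2 -> H != 0 ->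
  ((exists L : {mpoly F[n]}, - opcomm d X2 H = opmul d L H) <->
   (exists psi : F, opmul d H X2 = opmul d (X2 + psi%:MP) H)).
Proof.
move=> /msize_le_of_order_le sX2 nH; split=> [[L hL]|[psi hpsi]].
- exists L@_0; rewrite -(msize1_polyC (msize_opcomm_quotient d sX2 nH hL)).
  by rewrite opmulDl -hL /opcomm opprB addrC subrK.
- by exists psi%:MP; rewrite /opcomm hpsi opmulDl opprB addrC addKr.
Qed.
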